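(* Let $\ell,\hat\ell:\mathbb{R}^q\times\mathbb{R}^q\to(0,1)$ with $\hat\ell$ continuous and $\hat\ell(x,\xi)\ge\ell(x,\xi)$ for all $x,\xi$. Let $s\in\mathbb{R}^q$, let $c_1,\dots,c_M\in\mathbb{R}^q$, and let $(\xi_k)_{k\in\mathbb{N}}$ be $n$-periodic ($\xi_{k+n}=\xi_k$ for all $k$). For $a,b:\mathbb{R}^q\times\mathbb{R}^q\to(0,1)$ and $x\in\mathbb{R}^q$ define $$K(s,a\,\|\,x,b;\xi_{1:n})=\sum_{k=1}^n\Big[a(s,\xi_k)\ln\frac{a(s,\xi_k)}{b(x,\xi_k)}+(1-a(s,\xi_k))\ln\frac{1-a(s,\xi_k)}{1-b(x,\xi_k)}\Big],$$ and let $$B_{\mathrm{true}}=\operatorname*{argmin}_{i\in\{1,\dots,M\}}K(s,\ell\,\|\,c_i,\hat\ell;\xi_{1:n}),\qquad B_{\mathrm{env}}=\operatorname*{argmin}_{i\in\{1,\dots,M\}}K(s,\hat\ell\,\|\,c_i,\hat\ell;\xi_{1:n}).$$ Suppose that for every $i\in\{1,\dots,M\}$ there exists $j\in B_{\mathrm{true}}$ such that $\hat\ell(c_j,\xi_k)\ge\hat\ell(c_i,\xi_k)$ for all $k\in\{1,\dots,n\}$. Then $B_{\mathrm{env}}\subset B_{\mathrm{true}}$.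
   Context: $\ell$ is the true detection-probability function and $\hat\ell$ an envelope used by the estimator in its place. The paper denotes $B_{\mathrm{true}}$ by $\mathcal{B}(\ell\mid\hat\ell)$ and $B_{\mathrm{env}}$ by $\mathcal{B}(\hat\ell\mid\hat\ell)$. *)

From HB Require Import structures.
From mathcomp Require Import all_boot all_order all_algebra.
From mathcomp Require Import all_classical all_reals all_analysis.
Set Implicit Arguments. Unset Strict Implicit. Unset Printing Implicit Defensive.
Import Order.TTheory GRing.Theory Num.Theory.
Import numFieldTopology.Exports numFieldNormedType.Exports.
Local Open Scope ring_scope.

Definition Kdiv (R : realType) (q : nat) (a b : 'rV[R]_q -> 'rV[R]_q -> R)
  (s x : 'rV[R]_q) (xi : nat -> 'rV[R]_q) (n : nat) : R :=
  \sum_(1 <= k < n.+1)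
    (a s (xi k) * ln (a s (xi k) / b x (xi k))
     + (1 - a s (xi k)) * ln ((1 - a s (xi k)) / (1 - b x (xi k)))).

(* argmin over i in {1..M} (indexed by 'I_M) as a finite set *)
Definition argmin_set (R : realType) (M : nat) (f : 'I_M -> R) : {set 'I_M} :=
  [set i | [forall j, f i <= f j]].

(* For fixed candidates b_i <= b_j, the gap kl(t || b_i) - kl(t || b_j) between two
   Bernoulli divergences is affine in t with nonnegative slope
   ln(b_j / b_i) - ln((1 - b_j) / (1 - b_i)).  Replacing the true detection probability
   l by the envelope lhat >= l therefore can only increase the gap
   K(l || c_i) - K(l || c_j) termwise.  If i minimises the envelope divergence and j is a
   true minimiser dominating c_i, then
   K(l || c_i) - K(l || c_j) <= K(lhat || c_i) - K(lhat || c_j) <= 0,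
   so i is a true minimiser as well. *)
From HB Require Import structures.
From mathcomp Require Import all_boot all_order all_algebra.
From mathcomp Require Import all_classical all_reals all_analysis.
From mathcomp Require Import lra.
Set Implicit Arguments. Unset Strict Implicit. Unset Printing Implicit Defensive.
Import Order.TTheory GRing.Theory Num.Theory.
Import numFieldTopology.Exports numFieldNormedType.Exports.
Local Open Scope ring_scope.

Section BernoulliKL.
Variable R : realType.

Definition bernoulli_kl (t b : R) : R :=
  t * ln (t / b) + (1 - t) * ln ((1 - t) / (1 - b)).

Lemma bernoulli_klB (t bi bj : R) :
  0 < t < 1 -> 0 < bi < 1 -> 0 < bj < 1 ->
  bernoulli_kl t bi - bernoulli_kl t bj =
  t * (ln bj - ln bi) + (1 - t) * (ln (1 - bj) - ln (1 - bi)).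
Proof.
move=> /andP[t0 t1] /andP[bi0 bi1] /andP[bj0 bj1].
rewrite /bernoulli_kl !ln_div ?posrE ?subr_gt0 //; lra.
Qed.

Lemma bernoulli_klB_le (t p bi bj : R) :
  0 < t <= p -> p < 1 -> 0 < bi <= bj -> bj < 1 ->
  bernoulli_kl t bi - bernoulli_kl t bj <= bernoulli_kl p bi - bernoulli_kl p bj.
Proof.
move=> /andP[t0 tp] p1 /andP[bi0 bij] bj1.
rewrite !bernoulli_klB ?t0 ?bi0 ?bj1 /=; try lra.
have ln_bij : ln bi <= ln bj by rewrite ler_ln ?posrE //; lra.
have ln_1bij : ln (1 - bj) <= ln (1 - bi) by rewrite ler_ln ?posrE ?subr_gt0; lra.
nra.
Qed.

End BernoulliKL.

Lemma KdivE (R : realType) (q : nat) (a b : 'rV[R]_q -> 'rV[R]_q -> R)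
    (s x : 'rV[R]_q) (xi : nat -> 'rV[R]_q) (n : nat) :
  Kdiv a b s x xi n = \sum_(1 <= k < n.+1) bernoulli_kl (a s (xi k)) (b x (xi k)).
Proof. by []. Qed.

Lemma KdivB_le (R : realType) (q : nat) (a a' b : 'rV[R]_q -> 'rV[R]_q -> R)
    (s x y : 'rV[R]_q) (xi : nat -> 'rV[R]_q) (n : nat) :
  (forall k, (1 <= k <= n)%N ->
     [/\ 0 < a s (xi k) <= a' s (xi k), a' s (xi k) < 1,
         0 < b x (xi k) <= b y (xi k) & b y (xi k) < 1]) ->
  Kdiv a b s x xi n - Kdiv a b s y xi n <= Kdiv a' b s x xi n - Kdiv a' b s y xi n.
Proof.
move=> hk; rewrite !KdivE -!sumrB !big_nat.
apply: ler_sum => k /andP[k1 kn].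
have [] := hk k; first by rewrite k1 -ltnS.
exact: bernoulli_klB_le.
Qed.

Lemma argmin_setP (R : realType) (M : nat) (f : 'I_M -> R) (i : 'I_M) :
  reflect (forall j, f i <= f j) (i \in argmin_set f).
Proof. by rewrite inE; apply: forallP. Qed.

Lemma argmin_set_gap (R : realType) (M : nat) (f g : 'I_M -> R) (i j : 'I_M) :
  i \in argmin_set g -> j \in argmin_set f -> f i - f j <= g i - g j ->
  i \in argmin_set f.
Proof.
move=> /argmin_setP gi /argmin_setP fj gap; apply/argmin_setP => m.
have := gi j; have := fj m; lra.
Qed.

Theorem proposition4 (R : realType) (q M n : nat)
  (l lhat : 'rV[R]_q -> 'rV[R]_q -> R)
  (hl : forall x xi, 0 < l x xi < 1)
  (hlhat : forall x xi, 0 < lhat x xi < 1)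
  (hcont : continuous (fun p : 'rV[R]_q * 'rV[R]_q => lhat p.1 p.2))
  (hge : forall x xi, l x xi <= lhat x xi)
  (s : 'rV[R]_q) (c : 'I_M -> 'rV[R]_q) (xi : nat -> 'rV[R]_q)
  (hper : forall k, xi (k + n)%N = xi k)
  (hdom : forall i : 'I_M, exists2 j : 'I_M,
     j \in argmin_set (fun i' => Kdiv l lhat s (c i') xi n) &
     forall k, (1 <= k <= n)%N -> lhat (c i) (xi k) <= lhat (c j) (xi k)) :
  argmin_set (fun i => Kdiv lhat lhat s (c i) xi n)
  \subset argmin_set (fun i => Kdiv l lhat s (c i) xi n).
Proof.
apply/fintype.subsetP => i env_i.
have [j true_j dom_ij] := hdom i.
apply: argmin_set_gap env_i true_j _.
apply: KdivB_le => k /dom_ij lhat_ij.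
have /andP[l0 l1] := hl s (xi k).
have /andP[lhs0 lhs1] := hlhat s (xi k).
have /andP[lhi0 lhi1] := hlhat (c i) (xi k).
have /andP[lhj0 lhj1] := hlhat (c j) (xi k).
by split; rewrite ?l0 ?lhi0 ?hge.
Qed.
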